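(* Let $A_1,\ldots,A_k$ and $B_1,\ldots,B_k$ be $n\times n$ Hermitian matrices with $mI\le A_i,B_i\le MI$ for $i=1,\ldots,k$ and some scalars $0<m<M$, and let $w_1,\ldots,w_k$ be positive scalars with $\sum_{i=1}^kw_i=1$. Then $$\left(\sum_{i=1}^kw_iA_i^2\right)^{1/2}+\left(\sum_{i=1}^kw_iB_i^2\right)^{1/2}\le\frac{M+m}{2\sqrt{Mm}}\left(\sum_{i=1}^kw_i(A_i+B_i)^2\right)^{1/2}$$ and $$\left(\sum_{i=1}^kw_iA_i^2\right)^{1/2}+\left(\sum_{i=1}^kw_iB_i^2\right)^{1/2}\le\frac{(M-m)^2}{2(M+m)}I+\left(\sum_{i=1}^kw_i(A_i+B_i)^2\right)^{1/2}.$$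
   Context: $\le$ is the Löwner order on Hermitian matrices. *)

From HB Require Import structures.
From mathcomp Require Import all_boot all_order all_algebra.
Set Implicit Arguments. Unset Strict Implicit. Unset Printing Implicit Defensive.
Import Order.TTheory GRing.Theory Num.Theory.
Local Open Scope ring_scope.
Local Open Scope sesquilinear_scope.

Definition psdmx (C : numClosedFieldType) (n : nat) (A : 'M[C]_n) : Prop :=
  A \is hermsymmx /\ forall u : 'rV[C]_n, 0 <= (u *m A *m u ^t*) 0 0.

Definition loewner_le (C : numClosedFieldType) (n : nat) (A B : 'M[C]_n) : Prop :=
  psdmx (B - A).

(* Principal matrix square root via the spectral decomposition
   A = P^-1 diag(d) P (P unitary); for A PSD this is the unique PSD root. *)
Definition sqrtmx (C : numClosedFieldType) (n : nat) (A : 'M[C]_n) : 'M[C]_n :=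
  invmx (spectralmx A) *m diag_mx (map_mx sqrtC (spectral_diag A)) *m spectralmx A.

From HB Require Import structures.
From mathcomp Require Import all_boot all_order all_algebra.
From mathcomp Require Import ring.
Import Order.TTheory GRing.Theory Num.Theory.
Local Open Scope ring_scope.
Local Open Scope sesquilinear_scope.

(* If m <= A <= M then A - m and M - A are commuting positive semidefinite
   matrices, so their product is positive and A^2 <= (M + m) A - M m.
   Averaging, sum_i w_i A_i^2 <= (M + m) S - M m with S = sum_i w_i A_i.
   Completing squares, (M + m) S - M m lies below both (K S)^2, with
   K = (M + m) / (2 sqrt(M m)), and (S + d)^2, with d = (M - m)^2 / (4 (M + m)).
   As P^2 <= Q^2 implies P <= Q for positive P, Q (test Q - P on its
   eigenvectors), (sum_i w_i A_i^2)^(1/2) <= K S and <= S + d.  Finally the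
   variance sum_i w_i (F_i - S)^2 is positive, which gives
   S_A + S_B <= (sum_i w_i (A_i + B_i)^2)^(1/2); adding the bounds for A and B
   proves both inequalities. *)

Section Loewner.
Context {C : numClosedFieldType} {n : nat}.
Implicit Types (A B D T : 'M[C]_n) (u : 'rV[C]_n).

Lemma trmxC_mul p q r (A : 'M[C]_(p, q)) (B : 'M[C]_(q, r)) :
  (A *m B)^t* = B^t* *m A^t*.
Proof. by rewrite trmx_mul map_mxM. Qed.

Lemma trmxCD p q (A B : 'M[C]_(p, q)) : (A + B)^t* = A^t* + B^t*.
Proof. by rewrite linearD map_mxD. Qed.

Lemma trmxCZ p q c (A : 'M[C]_(p, q)) : (c *: A)^t* = c^* *: A^t*.
Proof. by rewrite linearZ map_mxZ. Qed.

Lemma hermsymmxP A : reflect (A^t* = A) (A \is hermsymmx).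
Proof.
apply: (iffP (is_hermitianmxP false Num.conj A)); by rewrite expr0 scale1r.
Qed.

Lemma hermsymmxD A B :
  A \is hermsymmx -> B \is hermsymmx -> A + B \is hermsymmx.
Proof.
by move=> /hermsymmxP hA /hermsymmxP hB; apply/hermsymmxP; rewrite trmxCD hA hB.
Qed.

Lemma hermsymmxB A B :
  A \is hermsymmx -> B \is hermsymmx -> A - B \is hermsymmx.
Proof.
move=> /hermsymmxP hA /hermsymmxP hB; apply/hermsymmxP.
by rewrite linearB map_mxB /= hA hB.
Qed.

Lemma hermsymmxZ c A :
  c \is Num.real -> A \is hermsymmx -> c *: A \is hermsymmx.
Proof.
by move=> cR /hermsymmxP hA; apply/hermsymmxP; rewrite trmxCZ conj_Creal ?hA.
Qed.

Lemma hermsymmx_scalar {c} : c \is Num.real -> (c%:M : 'M[C]_n) \is hermsymmx.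
Proof. by move=> cR; rewrite -scalemx1 hermsymmxZ // hermitian1mx_subproof. Qed.

Lemma hermsymmx_sum I (r : seq I) (F : I -> 'M[C]_n) :
  (forall i, F i \is hermsymmx) -> \sum_(i <- r) F i \is hermsymmx.
Proof.
move=> hF; elim/big_rec: _ => [|i B _ hB]; last exact: hermsymmxD.
by rewrite -(scale0r 1%:M) scalemx1 hermsymmx_scalar ?real0.
Qed.

Definition qform A u := (u *m A *m u^t*) 0 0.

Lemma qformD A B u : qform (A + B) u = qform A u + qform B u.
Proof. by rewrite /qform mulmxDr mulmxDl mxE. Qed.

Lemma qformB A B u : qform (A - B) u = qform A u - qform B u.
Proof. by rewrite /qform mulmxBr mulmxBl !mxE. Qed.

Lemma qformZ c A u : qform (c *: A) u = c * qform A u.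
Proof. by rewrite /qform -scalemxAr -scalemxAl mxE. Qed.

Lemma psdmx_herm A : psdmx A -> A^t* = A.
Proof. by case=> /hermsymmxP. Qed.

Lemma psdmxD {A B} : psdmx A -> psdmx B -> psdmx (A + B).
Proof.
move=> [hA pA] [hB pB]; split=> [|u]; first exact: hermsymmxD.
by rewrite -/(qform _ u) qformD; apply: addr_ge0; [exact: pA | exact: pB].
Qed.

Lemma psdmxZ {c A} : 0 <= c -> psdmx A -> psdmx (c *: A).
Proof.
move=> c0 [hA pA]; split=> [|u]; first by rewrite hermsymmxZ ?ger0_real.
by rewrite -/(qform _ u) qformZ; apply: mulr_ge0; last exact: pA.
Qed.

Lemma psdmx_congr T {A} : psdmx A -> psdmx (T *m A *m T^t*).
Proof.
move=> [/hermsymmxP hA pA]; split=> [|u].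
  by apply/hermsymmxP; rewrite !trmxC_mul trmxCK hA mulmxA.
by rewrite /qform !mulmxA -mulmxA -trmxC_mul; apply: pA.
Qed.

Lemma psdmx_diag {e : 'rV[C]_n} : (forall j, 0 <= e 0 j) -> psdmx (diag_mx e).
Proof.
move=> e0; split=> [|u].
  apply/hermsymmxP/matrixP => i j; rewrite !mxE eq_sym.
  by case: eqP => [->|_]; rewrite ?mulr1n ?mulr0n ?rmorph0 ?geC0_conj.
rewrite mul_mx_diag mxE; apply: sumr_ge0 => j _.
by rewrite !mxE mulrAC mulr_ge0 ?mul_conjC_ge0.
Qed.

Lemma psdmx_scalar {c} : 0 <= c -> psdmx (c%:M : 'M[C]_n).
Proof.
by move=> c0; rewrite -diag_const_mx; apply: psdmx_diag => j; rewrite mxE.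
Qed.

Lemma psdmx0 : psdmx (0 : 'M[C]_n).
Proof. by rewrite -(raddf0 (@scalar_mx C n)); apply: psdmx_scalar. Qed.

Lemma psdmx_sum I (r : seq I) (P : pred I) (F : I -> 'M[C]_n) :
  (forall i, P i -> psdmx (F i)) -> psdmx (\sum_(i <- r | P i) F i).
Proof.
move=> pF; elim/big_rec: _ => [|i B Pi pB]; first exact: psdmx0.
exact: psdmxD (pF i Pi) pB.
Qed.

Lemma psdmx_sqr T : T \is hermsymmx -> psdmx (T *m T).
Proof.
move=> /hermsymmxP hT; have := psdmx_congr T (psdmx_scalar (@ler01 C)).
by rewrite mulmx1 hT.
Qed.

Lemma loewner_le_refl A : loewner_le A A.
Proof. by rewrite /loewner_le subrr; apply: psdmx0. Qed.

Lemma loewner_le_trans {B A D} :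
  loewner_le A B -> loewner_le B D -> loewner_le A D.
Proof. by move=> hAB hBD; have := psdmxD hBD hAB; rewrite addrA subrK. Qed.

Lemma loewner_le_hermsymmx {A B} :
  A \is hermsymmx -> loewner_le A B -> B \is hermsymmx.
Proof. by move=> hA [hBA _]; rewrite -(subrK A B) hermsymmxD. Qed.

Lemma loewner_leD {A B A' B'} :
  loewner_le A B -> loewner_le A' B' -> loewner_le (A + A') (B + B').
Proof. by move=> h h'; rewrite /loewner_le opprD addrACA; apply: psdmxD. Qed.

Lemma loewner_leZ {c A B} :
  0 <= c -> loewner_le A B -> loewner_le (c *: A) (c *: B).
Proof. by rewrite /loewner_le -scalerBr; apply: psdmxZ. Qed.

Lemma loewner_le_sum I (r : seq I) (F G : I -> 'M[C]_n) :
  (forall i, loewner_le (F i) (G i)) ->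
  loewner_le (\sum_(i <- r) F i) (\sum_(i <- r) G i).
Proof.
by move=> hFG; rewrite /loewner_le -sumrB; apply: psdmx_sum => i _; apply: hFG.
Qed.

End Loewner.

Section Spectral.
Context {C : numClosedFieldType} {n : nat} {H : 'M[C]_n}.
Hypothesis hH : H \is hermsymmx.
Let U := spectralmx H.
Let d := spectral_diag H.

Lemma hermsymmx_spectralE : H = U^t* *m diag_mx d *m U.
Proof.
have /orthomx_spectralP {1}-> := hermitian_normalmx hH.
by rewrite invmx_unitary // spectral_unitarymx.
Qed.

Lemma spectral_row_eigen j : row j U *m H = d 0 j *: row j U.
Proof.
have UUt : U *m U^t* = 1%:M by apply/unitarymxP/spectral_unitarymx.
rewrite {1}hermsymmx_spectralE !mulmxA -row_mul UUt row1 -rowE row_diag_mx.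
by rewrite -scalemxAl -rowE.
Qed.

Lemma qform_spectral_row j : qform H (row j U) = d 0 j.
Proof.
have /row_unitarymxP/(_ j j) := spectral_unitarymx H; rewrite dotmxE eqxx => h1.
by rewrite /qform spectral_row_eigen -scalemxAl mxE h1 mulr1.
Qed.

Lemma psdmx_spectral_diagP : psdmx H <-> forall j, 0 <= d 0 j.
Proof.
split=> [[_ pH] j|d0]; first by rewrite -qform_spectral_row; apply: pH.
rewrite hermsymmx_spectralE.
by have := psdmx_congr (U^t*) (psdmx_diag d0); rewrite trmxCK.
Qed.

End Spectral.

Section SquareRoot.
Context {C : numClosedFieldType} {n : nat}.
Implicit Types (P Q S X : 'M[C]_n).

Lemma sqrtmx_spectralE S : sqrtmx S =
  (spectralmx S)^t* *m diag_mx (map_mx sqrtC (spectral_diag S)) *m spectralmx S.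
Proof. by rewrite /sqrtmx invmx_unitary // spectral_unitarymx. Qed.

Lemma psdmx_sqrtmx {S} : psdmx S -> psdmx (sqrtmx S).
Proof.
move=> pS; have /(psdmx_spectral_diagP (proj1 pS)) d0 := pS.
rewrite sqrtmx_spectralE; have := psdmx_congr ((spectralmx S)^t*) (psdmx_diag _).
by rewrite trmxCK; apply=> j; rewrite mxE sqrtC_ge0.
Qed.

Lemma sqrtmx_sqr {S} : psdmx S -> sqrtmx S *m sqrtmx S = S.
Proof.
move=> pS; have hS : S \is hermsymmx by case: pS.
have /(psdmx_spectral_diagP hS) d0 := pS.
have UUt : spectralmx S *m (spectralmx S)^t* = 1%:M.
  by apply/unitarymxP/spectral_unitarymx.
rewrite sqrtmx_spectralE [RHS](hermsymmx_spectralE hS) !mulmxA.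
rewrite -[_ *m spectralmx S *m _]mulmxA UUt mulmx1.
rewrite -[_ *m diag_mx _ *m diag_mx _]mulmxA.
rewrite mulmx_diag; congr (_ *m diag_mx _ *m _).
by apply/rowP => j; rewrite !mxE -expr2 sqrtCK.
Qed.

Lemma loewner_le_of_sqr {P Q} :
  psdmx P -> psdmx Q -> loewner_le (P *m P) (Q *m Q) -> loewner_le P Q.
Proof.
move=> pP pQ [_ pPQ].
have hQP : Q - P \is hermsymmx by apply: hermsymmxB; [case: pQ | case: pP].
apply/(psdmx_spectral_diagP hQP) => j.
set v := row j (spectralmx (Q - P)); set e := spectral_diag (Q - P) 0 j.
have vQP : v *m (Q - P) = e *: v by apply: spectral_row_eigen.
have QPv : (Q - P) *m v^t* = e *: v^t*.
  have /mxOverP/(_ 0 j)/conj_Creal eR := hermitian_spectral_diag_real hQP.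
  by have /hermsymmxP {1}<- := hQP; rewrite -trmxC_mul vQP trmxCZ eR.
have qQ : 0 <= qform Q v by case: pQ => _; apply.
have qP : 0 <= qform P v by case: pP => _; apply.
have qPQ : qform (Q *m Q - P *m P) v = e * (qform Q v + qform P v).
  have -> : Q *m Q - P *m P = (Q - P) *m Q + P *m (Q - P).
    by rewrite mulmxBl mulmxBr addrA subrK.
  rewrite qformD /qform mulmxA vQP.
  rewrite -[v *m (P *m _) *m _]mulmxA -[P *m _ *m _]mulmxA QPv.
  by rewrite -!scalemxAl -!scalemxAr mulmxA !mxE mulrDr.
have := pPQ v; rewrite -/(qform _ v) qPQ.
have := addr_ge0 qQ qP; rewrite le0r => /orP[|qQP_gt0]; last first.
  by rewrite pmulr_lge0.
rewrite paddr_eq0 // => /andP[/eqP qQ0 /eqP qP0] _.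
by rewrite /e -(qform_spectral_row hQP) qformB qQ0 qP0 subrr.
Qed.

Lemma sqrtmx_le {X Q} :
  psdmx X -> psdmx Q -> loewner_le X (Q *m Q) -> loewner_le (sqrtmx X) Q.
Proof.
move=> pX pQ; rewrite -{1}(sqrtmx_sqr pX).
exact: loewner_le_of_sqr (psdmx_sqrtmx pX) pQ.
Qed.

Lemma le_sqrtmx {P X} :
  psdmx P -> psdmx X -> loewner_le (P *m P) X -> loewner_le P (sqrtmx X).
Proof.
move=> pP pX; rewrite -{1}(sqrtmx_sqr pX).
exact: loewner_le_of_sqr pP (psdmx_sqrtmx pX).
Qed.

End SquareRoot.

Section QuadraticBounds.
Context {C : numClosedFieldType} {n : nat}.
Implicit Types (A P Q S : 'M[C]_n).

Lemma psdmxM_of_add_scalar {P Q} c :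
  psdmx P -> psdmx Q -> P + Q = c%:M -> 0 < c -> psdmx (P *m Q).
Proof.
move=> pP pQ PQc c_gt0; have QE : Q = c%:M - P by rewrite -PQc addrC addKr.
(* Since P and Q commute, c (P Q) = P Q (P + Q) = P Q P + Q P Q. *)
have PQC : P *m Q = Q *m P by rewrite QE mulmxBr mulmxBl scalar_mxC.
have cPQ : c *: (P *m Q) = P *m Q *m P + Q *m P *m Q.
  by rewrite -PQC -mulmxDr PQc mul_mx_scalar.
have -> : P *m Q = c^-1 *: (P *m Q *m P + Q *m P *m Q).
  by rewrite -cPQ scalerA mulVf ?gt_eqF // scale1r.
apply: psdmxZ; first by rewrite invr_ge0 ltW.
apply: psdmxD; [have := psdmx_congr P pQ | have := psdmx_congr Q pP];
  by rewrite psdmx_herm.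
Qed.

Lemma loewner_le_sqr_interval m M A : m < M ->
  loewner_le m%:M A -> loewner_le A M%:M ->
  loewner_le (A *m A) ((M + m) *: A - (M * m)%:M).
Proof.
move=> mM pAm pMA.
have := psdmxM_of_add_scalar (M - m) pAm pMA _ _.
rewrite subr_gt0 addrC subrKA raddfB => /(_ erefl mM).
suff -> : (A - m%:M) *m (M%:M - A) = (M + m) *: A - (M * m)%:M - A *m A by [].
rewrite mulmxBl !mulmxBr mul_mx_scalar !mul_scalar_mx scale_scalar_mx [m * M]mulrC.
by rewrite opprB addrACA scalerDl -[RHS]addrA [- _ - _]addrC.
Qed.

Lemma sqr_affine_mx a b S : (a *: S + b%:M) *m (a *: S + b%:M) =
  (a * a) *: (S *m S) + (a * b *+ 2) *: S + (b * b)%:M.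
Proof.
rewrite mulmxDl !mulmxDr -!scalemxAl -!scalemxAr mul_mx_scalar !mul_scalar_mx.
by rewrite scale_scalar_mx !scalerA -scalerMnl mulr2n !addrA.
Qed.

Lemma loewner_le_affine_sqr {S} a b y p q :
  S \is hermsymmx -> a \is Num.real -> y \is Num.real ->
  a * b *+ 2 - p = a * y *+ 2 -> b * b + q = y * y ->
  loewner_le (p *: S - q%:M) ((a *: S + b%:M) *m (a *: S + b%:M)).
Proof.
move=> hS aR yR linE constE; rewrite /loewner_le sqr_affine_mx.
suff -> : (a * a) *: (S *m S) + (a * b *+ 2) *: S + (b * b)%:M
          - (p *: S - q%:M) =
          (a * a) *: (S *m S) + (a * b *+ 2 - p) *: S + (b * b + q)%:M.
  rewrite linE constE -sqr_affine_mx; apply: psdmx_sqr.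
  by rewrite hermsymmxD ?hermsymmxZ ?hermsymmx_scalar.
rewrite scalerBl [(_ + q)%:M]raddfD /= opprB !addrA.
by rewrite addrAC [_ + (b * b)%:M - _]addrAC.
Qed.

Lemma loewner_le_sqr_mean I (r : seq I) (w : I -> C) (F : I -> 'M[C]_n) :
  (forall i, 0 <= w i) -> \sum_(i <- r) w i = 1 ->
  (forall i, F i \is hermsymmx) ->
  loewner_le ((\sum_(i <- r) w i *: F i) *m (\sum_(i <- r) w i *: F i))
             (\sum_(i <- r) w i *: (F i *m F i)).
Proof.
move=> w0 w1 hF; rewrite /loewner_le; set S := \sum_(i <- r) w i *: F i.
have hS : S \is hermsymmx.
  by apply: hermsymmx_sum => i; rewrite hermsymmxZ ?ger0_real.
suff -> : \sum_(i <- r) w i *: (F i *m F i) - S *m S =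
          \sum_(i <- r) w i *: ((F i - S) *m (F i - S)).
  by apply: psdmx_sum => i _; apply/psdmxZ/psdmx_sqr/hermsymmxB.
have termE i : w i *: ((F i - S) *m (F i - S)) =
    w i *: (F i *m F i) - (w i *: F i) *m S - S *m (w i *: F i)
    + w i *: (S *m S).
  rewrite mulmxBl !mulmxBr opprB addrA addrAC !scalerDr !scalerN.
  by rewrite (scalemxAl (w i) (F i) S) (scalemxAr (w i) S (F i)).
rewrite (eq_bigr _ (fun i _ => termE i)) !big_split /= !sumrN.
by rewrite -mulmx_suml -mulmx_sumr -scaler_suml w1 scale1r -/S subrK.
Qed.

Lemma mean_le_sqrtmx_mean_sqr I (r : seq I) (w : I -> C) (F : I -> 'M[C]_n) :
  (forall i, 0 <= w i) -> \sum_(i <- r) w i = 1 ->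
  (forall i, F i \is hermsymmx) -> psdmx (\sum_(i <- r) w i *: F i) ->
  loewner_le (\sum_(i <- r) w i *: F i)
             (sqrtmx (\sum_(i <- r) w i *: (F i *m F i))).
Proof.
move=> w0 w1 hF pS; apply: le_sqrtmx pS _ _; last exact: loewner_le_sqr_mean.
by apply: psdmx_sum => i _; apply/psdmxZ/psdmx_sqr.
Qed.
End QuadraticBounds.

Section WeightedMean.
Context {C : numClosedFieldType} {n k : nat}.
Context {A : 'I_k -> 'M[C]_n} {w : 'I_k -> C} {m M : C}.
Hypotheses (m_gt0 : 0 < m) (mM : m < M).
Hypothesis A_bounds :
  forall i, loewner_le m%:M (A i) /\ loewner_le (A i) M%:M.
Hypotheses (w_ge0 : forall i, 0 <= w i) (w_sum1 : \sum_(i < k) w i = 1).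

Let S := \sum_(i < k) w i *: A i.
Let X := \sum_(i < k) w i *: (A i *m A i).

Lemma scalar_le_weighted_mean : loewner_le m%:M S.
Proof.
rewrite /loewner_le.
have -> : S - m%:M = \sum_(i < k) w i *: (A i - m%:M).
  under eq_bigr do rewrite scalerBr.
  by rewrite sumrB -scaler_suml w_sum1 scale1r.
by apply: psdmx_sum => i _; apply: psdmxZ => //; case: (A_bounds i).
Qed.

Lemma psdmx_weighted_mean : psdmx S.
Proof.
have := psdmxD scalar_le_weighted_mean (psdmx_scalar (ltW m_gt0)).
by rewrite subrK.
Qed.

Lemma psdmx_weighted_mean_sqr : psdmx X.
Proof.
apply: psdmx_sum => i _; apply/psdmxZ/psdmx_sqr => //.
have hm : (m%:M : 'M[C]_n) \is hermsymmx by rewrite hermsymmx_scalar ?gtr0_real.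
by case: (A_bounds i) => /(loewner_le_hermsymmx hm).
Qed.

Lemma weighted_mean_sqr_le : loewner_le X ((M + m) *: S - (M * m)%:M).
Proof.
have -> : (M + m) *: S - (M * m)%:M =
          \sum_(i < k) w i *: ((M + m) *: A i - (M * m)%:M).
  under [RHS]eq_bigr do rewrite scalerBr scalerA mulrC -scalerA.
  by rewrite sumrB -scaler_sumr -scaler_suml w_sum1 scale1r.
apply: loewner_le_sum => i; apply: loewner_leZ => //.
by case: (A_bounds i); apply: loewner_le_sqr_interval.
Qed.

Lemma sqrtmx_weighted_mean_sqr_le_scale :
  loewner_le (sqrtmx X) (((M + m) / (2 * sqrtC (M * m))) *: S).
Proof.
set s := sqrtC (M * m); set K := (M + m) / (2 * s).
have M_gt0 : 0 < M := lt_trans m_gt0 mM.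
have s_gt0 : 0 < s by rewrite sqrtC_gt0 mulr_gt0.
have K_ge0 : 0 <= K by rewrite divr_ge0 ?mulr_ge0 ?addr_ge0 ?ltW.
have [hS _] := psdmx_weighted_mean.
apply: sqrtmx_le psdmx_weighted_mean_sqr (psdmxZ K_ge0 psdmx_weighted_mean) _.
apply: loewner_le_trans weighted_mean_sqr_le _.
(* (K S - s)^2 = (K S)^2 - ((M + m) S - M m) because 2 K s = M + m. *)
have := loewner_le_affine_sqr K 0 (- s) (M + m) (M * m) hS (ger0_real K_ge0).
rewrite raddf0 addr0; apply; first by rewrite rpredN gtr0_real.
  by rewrite /K; field; rewrite gt_eqF.
by rewrite mulr0 add0r mulrNN -expr2 sqrtCK.
Qed.

Lemma sqrtmx_weighted_mean_sqr_le_shift :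
  loewner_le (sqrtmx X) (S + ((M - m) ^+ 2 / (4 * (M + m)))%:M).
Proof.
set d := (M - m) ^+ 2 / (4 * (M + m)).
have Mm_gt0 : 0 < M + m by rewrite addr_gt0 // (lt_trans m_gt0 mM).
have d_ge0 : 0 <= d by rewrite divr_ge0 ?exprn_ge0 ?mulr_ge0 ?ltW ?subr_gt0.
have [hS _] := psdmx_weighted_mean.
apply: sqrtmx_le psdmx_weighted_mean_sqr
  (psdmxD psdmx_weighted_mean (psdmx_scalar d_ge0)) _.
apply: loewner_le_trans weighted_mean_sqr_le _.
(* (S - t)^2 = (S + d)^2 - ((M + m) S - M m) for t = (M + m) / 2 - d. *)
set t := (M + m) / 2 - d.
have := loewner_le_affine_sqr 1 d (- t) (M + m) (M * m) hS (real1 C).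
rewrite scale1r; apply.
- by rewrite rpredN rpredB ?(ger0_real d_ge0) // ger0_real ?divr_ge0 ?ltW.
- by rewrite /t !mul1r; field.
- by rewrite /t /d; field; rewrite gt_eqF.
Qed.

End WeightedMean.

Theorem mainTheorem9 (C : numClosedFieldType) (n k : nat)
    (A B : 'I_k -> 'M[C]_n) (w : 'I_k -> C) (m M : C) :
  0 < m -> m < M ->
  (forall i, A i \is hermsymmx) -> (forall i, B i \is hermsymmx) ->
  (forall i, loewner_le (m%:M) (A i) /\ loewner_le (A i) (M%:M)) ->
  (forall i, loewner_le (m%:M) (B i) /\ loewner_le (B i) (M%:M)) ->
  (forall i, 0 < w i) -> \sum_(i < k) w i = 1 ->
  let SA := sqrtmx (\sum_(i < k) w i *: (A i *m A i)) in
  let SB := sqrtmx (\sum_(i < k) w i *: (B i *m B i)) in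
  let SAB := sqrtmx (\sum_(i < k) w i *: ((A i + B i) *m (A i + B i))) in
  loewner_le (SA + SB) (((M + m) / (2 * sqrtC (M * m))) *: SAB) /\
  loewner_le (SA + SB) (((M - m) ^+ 2 / (2 * (M + m)))%:M + SAB).
Proof.
move=> m_gt0 mM hA hB bA bB w_gt0 w_sum1 SA SB SAB.
have w_ge0 i : 0 <= w i := ltW (w_gt0 i).
have M_gt0 : 0 < M := lt_trans m_gt0 mM.
set SA' := \sum_(i < k) w i *: A i; set SB' := \sum_(i < k) w i *: B i.
have means_le_SAB : loewner_le (SA' + SB') SAB.
  have sumE : \sum_(i < k) w i *: (A i + B i) = SA' + SB'.
    by rewrite -big_split; apply: eq_bigr => i _; rewrite scalerDr.
  rewrite -sumE; apply: mean_le_sqrtmx_mean_sqr => // [i|].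
    by rewrite hermsymmxD.
  by rewrite sumE; apply: psdmxD; exact: psdmx_weighted_mean m_gt0 _ w_ge0 w_sum1.
split.
  apply: loewner_le_trans (loewner_leD
    (sqrtmx_weighted_mean_sqr_le_scale m_gt0 mM bA w_ge0 w_sum1)
    (sqrtmx_weighted_mean_sqr_le_scale m_gt0 mM bB w_ge0 w_sum1)) _.
  rewrite -scalerDr; apply: loewner_leZ means_le_SAB.
  by rewrite divr_ge0 ?mulr_ge0 ?addr_ge0 ?sqrtC_ge0 ?mulr_ge0 ?ler0n ?ltW.
apply: loewner_le_trans (loewner_leD
  (sqrtmx_weighted_mean_sqr_le_shift m_gt0 mM bA w_ge0 w_sum1)
  (sqrtmx_weighted_mean_sqr_le_shift m_gt0 mM bB w_ge0 w_sum1)) _.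
rewrite addrACA -raddfD /= addrC.
have -> : (M - m) ^+ 2 / (4 * (M + m)) + (M - m) ^+ 2 / (4 * (M + m)) =
          (M - m) ^+ 2 / (2 * (M + m)).
  by field; rewrite gt_eqF ?addr_gt0.
exact: loewner_leD (loewner_le_refl _) means_le_SAB.
Qed.
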